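(* Let $S$ be an additively cancellative centrally essential semiring without non-zero zero-divisors, and let $D(S)$ be its ring of differences. If the ring $D(S)$ has no non-zero zero-divisors, then $S$ is commutative.
   Context: A semiring is a set $S$ with two binary operations $+$ and $\cdot$ such that $(S,+)$ is a commutative monoid with neutral element $0$, $(S,\cdot)$ is a monoid with identity $1$, multiplication distributes over addition on both sides, and $0s=s0=0$ for all $s\in S$. The center is $C(S)=\{s\in S: ss'=s's \text{ for all } s'\in S\}$. $S$ is centrally essential if for every non-zero $x\in S$ there exist non-zero $y,z\in C(S)$ with $xy=z$. $S$ is additively cancellative if $x+z=y+z$ implies $x=y$; such $S$ embeds as a subsemiring in a ring $D(S)$ (ring of differences) in which every element is $x-y$ with $x,y\in S$. An element $a$ is a zero-divisor if $ab=0$ or $ba=0$ for some non-zero $b$. *)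

From HB Require Import structures.
From mathcomp Require Import all_boot all_algebra.
Set Implicit Arguments. Unset Strict Implicit. Unset Printing Implicit Defensive.
Import GRing.Theory.
Local Open Scope ring_scope.

(* Semirings: MathComp's pzSemiRingType = commutative additive monoid,
   multiplicative monoid, two-sided distributivity, 0 absorbing. *)

Definition in_center (S : pzSemiRingType) (s : S) : Prop :=
  forall s' : S, s * s' = s' * s.

Definition centrally_essential (S : pzSemiRingType) : Prop :=
  forall x : S, x <> 0 ->
    exists y z : S, [/\ y <> 0, z <> 0, in_center y, in_center z & x * y = z].

Definition additively_cancellative (S : pzSemiRingType) : Prop :=
  forall x y z : S, x + z = y + z -> x = y.

Definition zero_divisor (S : pzSemiRingType) (a : S) : Prop :=
  exists b : S, b <> 0 /\ (a * b = 0 \/ b * a = 0).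

Definition no_nonzero_zero_divisors (S : pzSemiRingType) : Prop :=
  forall a : S, a <> 0 -> ~ zero_divisor a.

Definition ring_of_differences (S : pzSemiRingType) (R : pzRingType)
  (f : {rmorphism S -> R}) : Prop :=
  injective f /\ forall r : R, exists x y : S, r = f x - f y.

From HB Require Import structures.
From mathcomp Require Import all_boot all_algebra.
Set Implicit Arguments.
Unset Strict Implicit.
Unset Printing Implicit Defensive.
Local Open Scope ring_scope.
Import GRing.Theory.

(* If y and z = x y are central, then x w y = x y w = z w = w z = w x y, so
   x and w commute up to a right factor y.  In the ring of differences the
   difference x w - w x is therefore killed by the nonzero y; having no zero
   divisors, it vanishes. *)

Lemma mulr_central_commute (S : pzSemiRingType) (x y w : S) :
  in_center y -> in_center (x * y) -> x * w * y = w * x * y.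
Proof. by move=> cy cxy; rewrite -mulrA -cy mulrA cxy mulrA. Qed.

Lemma no_zero_divisors_mulIf (R : pzRingType) (a b : R) :
  no_nonzero_zero_divisors R -> b <> 0 -> a * b = 0 -> a = 0.
Proof.
move=> hR b0 ab0; have [//|/eqP a0] := eqVneq a 0.
by case: (hR a a0); exists b; split; [|left].
Qed.

Lemma injective_rmorph_mulIf (S : pzSemiRingType) (R : pzRingType)
    (f : {rmorphism S -> R}) (x w y : S) :
  injective f -> no_nonzero_zero_divisors R ->
  y <> 0 -> x * y = w * y -> x = w.
Proof.
move=> finj hR y0 exy; apply: (finj); apply: subr0_eq.
apply: (no_zero_divisors_mulIf (b := f y) hR).
  by move=> fy0; apply: y0; apply: finj; rewrite fy0 rmorph0.
by rewrite mulrBl -!rmorphM exy subrr.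
Qed.

Theorem proposition2p8 (S : pzSemiRingType) (R : pzRingType)
  (f : {rmorphism S -> R}) :
  additively_cancellative S ->
  centrally_essential S ->
  no_nonzero_zero_divisors S ->
  ring_of_differences f ->
  no_nonzero_zero_divisors R ->
  forall x y : S, x * y = y * x.
Proof.
move=> _ hce _ [finj _] hR x w.
have [->|/eqP x0] := eqVneq x 0; first by rewrite mul0r mulr0.
have [y [z [y0 _ cy cz exy]]] := hce x x0.
apply: (injective_rmorph_mulIf finj hR y0).
by apply: mulr_central_commute; rewrite ?exy.
Qed.
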